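(* Let $m\ge 1$, $S=\{1,\dots,2m+1\}$, $x_0=\{1,\dots,m\}$. For subsets $y,z\subseteq S$ put $\varrho(y,z)=(|x_0\cap y|,\,|x_0\cap z|,\,|y\cap z|,\,|x_0\cap y\cap z|)$. For $a,b\in\{m,m+1\}$ let $\mathcal{I}_{(a,b)}=\{\varrho(y,z): y\in\binom{S}{a},\ z\in\binom{S}{b}\}$. Then: (i) $\mathcal{I}_{(m,m)}$ is the set of integer four-tuples $(i,j,t,p)$ with $0\le i,j\le m$, $\max\{i+j-m,\,m-1-i-j\}\le t\le m-|i-j|$, and $\max\{0,\,i+j-m,\,i+t-m,\,j+t-m\}\le p\le \min\{i,\,j,\,t,\,i+j+t+1-m\}$. (ii) $\mathcal{I}_{(m,m+1)}$ is the set of integer four-tuples $(i,j,t,p)$ with $0\le i,j\le m$, $|i+j-m|\le t\le m-\max\{i-j,\,j-i-1\}$, and $i-\min\{i,\,m-j,\,m-t,\,i-j-t+m+1\}\le p\le i-\max\{0,\,i-j,\,i-t,\,m-j-t\}$. (iii) $\mathcal{I}_{(m+1,m)}$ is the set of integer four-tuples $(i,j,t,p)$ with $0\le i,j\le m$, $|i+j-m|\le t\le m-\max\{i-j-1,\,j-i\}$, and $j-\min\{m-i,\,j,\,m-t,\,j-i-t+m+1\}\le p\le j-\max\{0,\,j-i,\,j-t,\,m-i-t\}$. (iv) $\mathcal{I}_{(m+1,m+1)}$ is the set of integer four-tuples $(i,j,t,p)$ with $0\le i,j\le m$, $1+\max\{i+j-m-1,\,m-i-j\}\le t\le m+1-|i-j|$,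 and $i+j-m+\max\{0,\,m-i-j,\,t-i-1,\,t-j-1\}\le p\le i+j-m+\min\{m-i,\,m-j,\,t-1,\,m-i-j+t\}$. Moreover, each of the four sets $\mathcal{I}_{(m,m)},\mathcal{I}_{(m,m+1)},\mathcal{I}_{(m+1,m)},\mathcal{I}_{(m+1,m+1)}$ has cardinality $\binom{m+4}{4}$.
   Context: $\binom{S}{a}$ denotes the collection of $a$-element subsets of $S$. *)

From HB Require Import structures.
From mathcomp Require Import all_boot all_order all_algebra.
Set Implicit Arguments. Unset Strict Implicit. Unset Printing Implicit Defensive.
Import Order.TTheory GRing.Theory Num.Theory.

(* S = {1,...,2m+1} is modelled by 'I_(2m+1) = {0,...,2m} (shift by one);
   x0 = {1,...,m} becomes {0,...,m-1}. *)
Definition x0 (m : nat) : {set 'I_(2 * m + 1)} := [set i : 'I_(2 * m + 1) | (i < m)%N].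

Definition rho (m : nat) (y z : {set 'I_(2 * m + 1)}) : int * int * int * int :=
  (Posz #|x0 m :&: y|, Posz #|x0 m :&: z|, Posz #|y :&: z|, Posz #|x0 m :&: y :&: z|).

Definition ksubsets (m a : nat) : {set {set 'I_(2 * m + 1)}} :=
  [set y : {set 'I_(2 * m + 1)} | #|y| == a].

(* I_(a,b) = { rho(y,z) : y in binom(S,a), z in binom(S,b) }, as a duplicate-free
   list, so that its size is its cardinality *)
Definition Iset (m a b : nat) : seq (int * int * int * int) :=
  undup [seq rho y z | y <- enum (ksubsets m a), z <- enum (ksubsets m b)].

From HB Require Import structures.
From mathcomp Require Import all_boot all_order all_algebra.
From mathcomp Require Import zify.
Import Order.TTheory GRing.Theory Num.Theory.

Set Implicit Arguments.
Unset Strict Implicit.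
Unset Printing Implicit Defensive.

(* Write X = x0. The numbers rho(y, z) together with |y| and |z| determine the sizes of
   the eight Venn regions of X, y, z; conversely any eight nonnegative sizes summing to
   |X| = m inside X and to |~X| = m + 1 outside are realised, by consecutive blocks of
   indices. So I_(a,b) is the set of quadruples all of whose eight region sizes are
   nonnegative, and the four descriptions are this condition unfolded. Complementing z
   (resp. y) maps I_(a,b) bijectively onto I_(a,2m+1-b) (resp. I_(2m+1-a,b)), and I_(m,m)
   is in bijection with the compositions of m into five nonnegative parts, of which there
   are C(m+4, 4). *)

Local Notation quad := (int * int * int * int)%type.

Lemma card_setE n (P : pred nat) : #|[set k : 'I_n | P k]| = count P (iota 0 n).
Proof.
rewrite -val_enum_ord count_map cardsE cardE /enum_mem size_filter.
by rewrite (@eq_filter _ _ predT) // filter_predT.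
Qed.

Lemma count_iota_range lo hi n :
  count (fun k => lo <= k < hi) (iota 0 n) = minn hi n - lo.
Proof.
elim: n => [|n IHn]; first by rewrite minn0.
rewrite -addn1 iotaD count_cat IHn /=; case: (leqP lo n); case: (ltnP n hi) => /=; lia.
Qed.

Lemma leq_cardsUI (T : finType) (A B C : {set T}) :
  A :|: B \subset C -> #|A| + #|B| <= #|C| + #|A :&: B|.
Proof. by move=> /subset_leq_card; rewrite -cardsUI leq_add2r. Qed.

Definition two_block (m lo hi lo' hi' : nat) : {set 'I_(2 * m + 1)} :=
  [set k : 'I_(2 * m + 1) | if k < m then lo <= k < hi else lo' <= k - m < hi'].

Lemma card_two_block m lo hi lo' hi' : hi <= m -> hi' <= m.+1 ->
  #|two_block m lo hi lo' hi'| = (hi - lo) + (hi' - lo').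
Proof.
move=> hi_le hi'_le.
rewrite (@card_setE _ (fun k => if k < m then lo <= k < hi else lo' <= k - m < hi')).
have -> : 2 * m + 1 = m + (m + 1) by lia.
rewrite iotaD count_cat add0n -[X in iota X (m + 1)](addn0 m) iotaDl count_map.
rewrite (@eq_in_count _ _ [pred k | lo <= k < hi] (iota 0 m)); last first.
  by move=> k; rewrite mem_iota /= => ->.
rewrite (@eq_in_count _ _ [pred k | lo' <= k < hi'] (iota 0 (m + 1))); last first.
  by move=> k _ /=; rewrite ltnNge leq_addr /= addKn.
by rewrite !count_iota_range; lia.
Qed.

Lemma setI_two_block m lo1 hi1 lo1' hi1' lo2 hi2 lo2' hi2' :
  two_block m lo1 hi1 lo1' hi1' :&: two_block m lo2 hi2 lo2' hi2'
  = two_block m (maxn lo1 lo2) (minn hi1 hi2) (maxn lo1' lo2') (minn hi1' hi2').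
Proof. by apply/setP => k; rewrite !inE; case: ifP => _; lia. Qed.

Lemma x0_two_block m : x0 m = two_block m 0 m 0 0.
Proof. by apply/setP => k; rewrite !inE; case: ifP. Qed.

Lemma card_x0 m : #|x0 m| = m.
Proof. by rewrite x0_two_block card_two_block // !subn0 addn0. Qed.

Lemma card_x0C m : #|~: x0 m| = m.+1.
Proof. by have := cardsC (x0 m); rewrite card_x0 card_ord; lia. Qed.

Lemma rho_realized m (c_yz c_y c_z d_yz d_y d_z : nat) :
  c_y + c_yz + c_z <= m -> d_y + d_yz + d_z <= m.+1 ->
  exists y z : {set 'I_(2 * m + 1)},
    [/\ #|y| = c_y + c_yz + (d_y + d_yz), #|z| = c_yz + c_z + (d_yz + d_z)
      & rho y z = (Posz (c_y + c_yz), Posz (c_yz + c_z), Posz (c_yz + d_yz), Posz c_yz)].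
Proof.
move=> c_le d_le.
exists (two_block m 0 (c_y + c_yz) 0 (d_y + d_yz)),
       (two_block m c_y (c_y + c_yz + c_z) d_y (d_y + d_yz + d_z)).
rewrite /rho x0_two_block !setI_two_block !card_two_block; try lia.
split; [lia | lia | congr (_, _, _, _); lia].
Qed.

Definition compositions (m : nat) : {set 5.-tuple 'I_m.+1} :=
  [set w : 5.-tuple 'I_m.+1 | \sum_(k <- w) (k : nat) == m].

Lemma card_compositions m : #|compositions m| = 'C(m + 4, 4).
Proof. by rewrite card_ord_partitions addnC. Qed.

Lemma tuple5_parts m (w : 5.-tuple 'I_m.+1) :
  exists w0 w1 w2 w3 w4, map val w = [:: w0; w1; w2; w3; w4].
Proof.
have : size (map val w) = 5 by rewrite size_map size_tuple.
by case: (map val w) => [|w0 [|w1 [|w2 [|w3 [|w4 []]]]]] // _; exists w0, w1, w2, w3, w4.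
Qed.

Lemma in_compositions m (w : 5.-tuple 'I_m.+1) w0 w1 w2 w3 w4 :
  map val w = [:: w0; w1; w2; w3; w4] ->
  (w \in compositions m) = (w0 + w1 + w2 + w3 + w4 == m).
Proof.
by rewrite inE -(big_map val predT id) => ->; rewrite !big_cons big_nil addn0 !addnA.
Qed.

Lemma composition_of_parts m w0 w1 w2 w3 w4 : w0 + w1 + w2 + w3 + w4 = m ->
  exists2 w, w \in compositions m & map val w = [:: w0; w1; w2; w3; w4].
Proof.
move=> sum_m.
pose w : 5.-tuple 'I_m.+1 := [tuple inord w0; inord w1; inord w2; inord w3; inord w4].
have e : map val w = [:: w0; w1; w2; w3; w4] by rewrite /= !inordK //; lia.
by exists w; rewrite // (in_compositions e) sum_m.
Qed.

Definition quad_of_parts (w0 w1 w2 w3 w4 : nat) : quad :=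
  let h := w4./2 in
  (Posz (w0 + w2 + h), Posz (w0 + w1 + h), Posz (w0 + w3 + h), Posz (w0 + odd w4 * h)).

Definition quad_of_composition m (w : 5.-tuple 'I_m.+1) : quad :=
  if map val w is [:: w0; w1; w2; w3; w4] then quad_of_parts w0 w1 w2 w3 w4
  else (0, 0, 0, 0)%Z.

Local Open Scope ring_scope.

(* The eight Venn regions of X, y, z have nonnegative sizes, for |X| = n, |~: X| = n',
   |y| = a, |z| = b and v = (|X ∩ y|, |X ∩ z|, |y ∩ z|, |X ∩ y ∩ z|). *)
Definition venn_admissible (n n' a b : nat) (v : quad) : Prop :=
  let: (i, j, t, p) := v in
  0 <= p /\ 0 <= i - p /\ 0 <= j - p /\ 0 <= n%:Z - i - j + p /\
  0 <= t - p /\ 0 <= a%:Z - i - t + p /\ 0 <= b%:Z - j - t + p /\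
  0 <= n'%:Z - a%:Z - b%:Z + i + j + t - p.

Lemma venn_admissible_cards (T : finType) (X y z : {set T}) :
  venn_admissible #|X| #|~: X| #|y| #|z|
    (Posz #|X :&: y|, Posz #|X :&: z|, Posz #|y :&: z|, Posz #|X :&: y :&: z|).
Proof.
have p_le_i : (#|X :&: y :&: z| <= #|X :&: y|)%N by rewrite subset_leq_card ?subsetIl.
have p_le_j : (#|X :&: y :&: z| <= #|X :&: z|)%N.
  by rewrite subset_leq_card // setIAC subsetIl.
have p_le_t : (#|X :&: y :&: z| <= #|y :&: z|)%N.
  by rewrite subset_leq_card // -setIA subsetIr.
have in_X : (#|X :&: y| + #|X :&: z| <= #|X| + #|X :&: y :&: z|)%N.
  by rewrite -setIA setIIr leq_cardsUI // subUset !subsetIl.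
have in_y : (#|X :&: y| + #|y :&: z| <= #|y| + #|X :&: y :&: z|)%N.
  by rewrite [X :&: y]setIC -setIA setIIr leq_cardsUI // subUset !subsetIl.
have in_z : (#|X :&: z| + #|y :&: z| <= #|z| + #|X :&: y :&: z|)%N.
  by rewrite setIIl leq_cardsUI // subUset !subsetIr.
have out_X : (#|y :\: X| + #|z :\: X| <= #|~: X| + #|(y :&: z) :\: X|)%N.
  by rewrite setDIl leq_cardsUI // subUset !subsetDr.
have := cardsID X y; have := cardsID X z; have := cardsID X (y :&: z).
rewrite [y :&: X]setIC [z :&: X]setIC [y :&: z :&: X]setIC setIA /=.
lia.
Qed.

Lemma mem_Iset m a b v : v \in Iset m a b <-> venn_admissible m m.+1 a b v.
Proof.
rewrite mem_undup; split.
  case/allpairsP => -[y z] /=; rewrite !mem_enum !inE => -[/eqP <- /eqP <- ->].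
  by have := venn_admissible_cards (x0 m) y z; rewrite card_x0 card_x0C.
case: v => [[[i j] t] p] /= adm.
have [y [z [card_y card_z rho_yz]]] := @rho_realized m (absz p) (absz (i - p))
  (absz (j - p)) (absz (t - p)) (absz (a%:Z - i - t + p)) (absz (b%:Z - j - t + p))
  ltac:(lia) ltac:(lia).
apply/allpairsP; exists (y, z); rewrite /= !mem_enum !inE card_y card_z rho_yz.
by split; [apply/eqP; lia | apply/eqP; lia | congr (_, _, _, _); lia].
Qed.

Lemma venn_admissible_quad_of_parts m w0 w1 w2 w3 w4 :
  (w0 + w1 + w2 + w3 + w4 = m)%N ->
  venn_admissible m m.+1 m m (quad_of_parts w0 w1 w2 w3 w4).
Proof.
move=> sum_m; have := odd_double_half w4.
by rewrite /quad_of_parts; case: (odd w4) => /=; lia.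
Qed.

Lemma quad_of_parts_inj w0 w1 w2 w3 w4 v0 v1 v2 v3 v4 :
  (w0 + w1 + w2 + w3 + w4 = v0 + v1 + v2 + v3 + v4)%N ->
  quad_of_parts w0 w1 w2 w3 w4 = quad_of_parts v0 v1 v2 v3 v4 ->
  [:: w0; w1; w2; w3; w4] = [:: v0; v1; v2; v3; v4].
Proof.
move=> sum_eq [e1 e2 e3 e4].
have := odd_double_half w4; have := odd_double_half v4.
by move: e1 e2 e3 e4; case: (odd w4); case: (odd v4) => /= *; congr [:: _; _; _; _; _]; lia.
Qed.

(* With inner regions (p, i - p, j - p, m - i - j + p) and d = (t - p) - (m - i - j + p),
   admissibility for a = b = m says -min(m - i - j + p, p + 1) <= d <= min(i - p, j - p);
   the fifth part stores 2d when d >= 0 and -2d - 1 otherwise. *)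
Lemma quad_of_parts_surj m v : venn_admissible m m.+1 m m v ->
  exists w0 w1 w2 w3 w4, (w0 + w1 + w2 + w3 + w4 = m)%N /\ quad_of_parts w0 w1 w2 w3 w4 = v.
Proof.
case: v => [[[i j] t] p] /= adm.
rewrite /quad_of_parts; set d := t - p - (m%:Z - i - j + p).
have [d_ge0|d_lt0] := lerP 0 d.
- exists (absz p), (absz (j - p - d)%R), (absz (i - p - d)%R),
    (absz (m%:Z - i - j + p)%R), (absz d).*2.
  rewrite doubleK odd_double /=.
  by split; [lia | congr (_, _, _, _); lia].
- exists (absz (p + d + 1)%R), (absz (j - p)%R), (absz (i - p)%R),
    (absz (m%:Z - i - j + p + d)%R), (absz (- d - 1)%R).*2.+1.
  rewrite /= uphalf_double odd_double /=.
  by split; [lia | congr (_, _, _, _); lia].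
Qed.

Lemma size_Iset_mm m : size (Iset m m m) = 'C(m + 4, 4).
Proof.
rewrite -card_compositions cardE -(size_map (@quad_of_composition m)).
apply: perm_size; apply: uniq_perm; first exact: undup_uniq.
  rewrite map_inj_in_uniq ?enum_uniq // => w1 w2; rewrite !mem_enum.
  have [? [? [? [? [? e1]]]]] := tuple5_parts w1.
  have [? [? [? [? [? e2]]]]] := tuple5_parts w2.
  rewrite (in_compositions e1) (in_compositions e2) /quad_of_composition e1 e2.
  move=> /eqP sum1 /eqP sum2 eq_quad; apply/val_inj/(inj_map val_inj).
  by rewrite e1 e2; apply: quad_of_parts_inj eq_quad; rewrite sum1 sum2.
move=> v; apply/idP/idP.
  case/mem_Iset/quad_of_parts_surj => [w0 [w1 [w2 [w3 [w4 [sum_m <-]]]]]].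
  have [w w_in e] := composition_of_parts sum_m.
  by apply/mapP; exists w; rewrite ?mem_enum // /quad_of_composition e.
case/mapP => w; rewrite mem_enum => w_in ->; apply/mem_Iset.
have [? [? [? [? [? e]]]]] := tuple5_parts w.
move: w_in; rewrite (in_compositions e) /quad_of_composition e.
by move=> /eqP; apply: venn_admissible_quad_of_parts.
Qed.

Lemma size_uniq_involution (T : eqType) (g : T -> T) (s s' : seq T) :
  involutive g -> uniq s -> uniq s' -> (forall v, (v \in s') = (g v \in s)) ->
  size s' = size s.
Proof.
move=> gK s_uniq s'_uniq mem_s'; rewrite -(size_map g); apply: perm_size.
apply: uniq_perm => // [|v]; first by rewrite (map_inj_uniq (inv_inj gK)).
by rewrite -{1}(gK v) (mem_map (inv_inj gK)) mem_s' gK.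
Qed.

(* complement_z m |y| (rho y z) = rho y (~: z) and
   complement_y m |z| (rho y z) = rho (~: y) z. *)
Definition complement_z (n a : nat) (v : quad) : quad :=
  let: (i, j, t, p) := v in (i, n%:Z - j, a%:Z - t, i - p).

Definition complement_y (n b : nat) (v : quad) : quad :=
  let: (i, j, t, p) := v in (n%:Z - i, j, b%:Z - t, j - p).

Lemma complement_zK n a : involutive (complement_z n a).
Proof. by case=> [[[i j] t] p] /=; congr (_, _, _, _); lia. Qed.

Lemma complement_yK n b : involutive (complement_y n b).
Proof. by case=> [[[i j] t] p] /=; congr (_, _, _, _); lia. Qed.

Lemma size_Iset_complement_z m a b b' : (b + b' = 2 * m + 1)%N ->
  size (Iset m a b') = size (Iset m a b).
Proof.
move=> bb'; apply: (size_uniq_involution (complement_zK m a)); try exact: undup_uniq.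
case=> [[[i j] t] p]; apply/idP/idP => /mem_Iset adm; apply/mem_Iset; move: adm => /=; lia.
Qed.

Lemma size_Iset_complement_y m a a' b : (a + a' = 2 * m + 1)%N ->
  size (Iset m a' b) = size (Iset m a b).
Proof.
move=> aa'; apply: (size_uniq_involution (complement_yK m b)); try exact: undup_uniq.
case=> [[[i j] t] p]; apply/idP/idP => /mem_Iset adm; apply/mem_Iset; move: adm => /=; lia.
Qed.

Theorem proposition3p1 (m : nat) (hm : (1 <= m)%N) :
  let M : int := Posz m in
  (* (i) *)
  (forall i j t p : int, (i, j, t, p) \in Iset m m m <->
     [/\ 0 <= i <= M, 0 <= j <= M,
         Num.max (i + j - M) (M - 1 - i - j) <= t <= M - `|i - j|
       & Num.max (Num.max 0 (i + j - M)) (Num.max (i + t - M) (j + t - M)) <= p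
         <= Num.min (Num.min i j) (Num.min t (i + j + t + 1 - M))]) /\
  (* (ii) *)
  (forall i j t p : int, (i, j, t, p) \in Iset m m m.+1 <->
     [/\ 0 <= i <= M, 0 <= j <= M,
         `|i + j - M| <= t <= M - Num.max (i - j) (j - i - 1)
       & i - Num.min (Num.min i (M - j)) (Num.min (M - t) (i - j - t + M + 1)) <= p
         <= i - Num.max (Num.max 0 (i - j)) (Num.max (i - t) (M - j - t))]) /\
  (* (iii) *)
  (forall i j t p : int, (i, j, t, p) \in Iset m m.+1 m <->
     [/\ 0 <= i <= M, 0 <= j <= M,
         `|i + j - M| <= t <= M - Num.max (i - j - 1) (j - i)
       & j - Num.min (Num.min (M - i) j) (Num.min (M - t) (j - i - t + M + 1)) <= p
         <= j - Num.max (Num.max 0 (j - i)) (Num.max (j - t) (M - i - t))]) /\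
  (* (iv) *)
  (forall i j t p : int, (i, j, t, p) \in Iset m m.+1 m.+1 <->
     [/\ 0 <= i <= M, 0 <= j <= M,
         1 + Num.max (i + j - M - 1) (M - i - j) <= t <= M + 1 - `|i - j|
       & i + j - M + Num.max (Num.max 0 (M - i - j)) (Num.max (t - i - 1) (t - j - 1)) <= p
         <= i + j - M + Num.min (Num.min (M - i) (M - j)) (Num.min (t - 1) (M - i - j + t))]) /\
  (* cardinalities *)
  [/\ size (Iset m m m) = 'C(m + 4, 4), size (Iset m m m.+1) = 'C(m + 4, 4),
      size (Iset m m.+1 m) = 'C(m + 4, 4) & size (Iset m m.+1 m.+1) = 'C(m + 4, 4)].
Proof.
move=> M; rewrite {}/M.
split; [|split; [|split; [|split]]];
  try by move=> i j t p; rewrite mem_Iset /=; split=> [?|[? ? ? ?]]; [split|]; lia.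
have size_mm1 := @size_Iset_complement_z m m m m.+1 ltac:(lia).
have size_m1m := @size_Iset_complement_y m m m.+1 m ltac:(lia).
have size_m1m1 := @size_Iset_complement_z m m.+1 m m.+1 ltac:(lia).
by rewrite size_m1m1 size_m1m size_mm1 size_Iset_mm.
Qed.
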